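(* Let $K$ be a field, $n\ge 1$, and $A_n(\tau_n)$ a quiver of type $A_n$ with arbitrary orientation. Let $$\Theta\colon \bigoplus_{1\le a\le b\le n}\mathbb{I}[a,b]^{m^1_{a,b}}\to \bigoplus_{1\le a\le b\le n}\mathbb{I}[a,b]^{m^2_{a,b}},\qquad \Psi\colon \bigoplus_{1\le a\le b\le n}\mathbb{I}[a,b]^{m^2_{a,b}}\to \bigoplus_{1\le a\le b\le n}\mathbb{I}[a,b]^{m^3_{a,b}}$$ be morphisms of representations of $A_n(\tau_n)$. Then for all $1\le a\le b\le n$, $$[\Psi\Theta]^{a:b}_{a:b}=\Psi^{a:b}_{a:b}\,\Theta^{a:b}_{a:b}.$$
   Context: The interval representation $\mathbb{I}[a,b]$ of $A_n(\tau_n)$ has $K$ at vertices $a,\dots,b$, $0$ elsewhere, identity maps on arrows between two vertices in $[a,b]$, and zero maps otherwise; $\mathbb{I}[a,b]^m$ is the direct sum of $m$ copies. For a morphism $\Phi\colon\bigoplus\mathbb{I}[a,b]^{m_{a,b}}\to\bigoplus\mathbb{I}[a,b]^{m'_{a,b}}$, its block $\Phi^{c:d}_{a:b}\colon\mathbb{I}[a,b]^{m_{a,b}}\to\mathbb{I}[c,d]^{m'_{c,d}}$ is $\pi_{c,d}\circ\Phi\circ\iota_{a,b}$, where $\iota_{a,b}$ is the canonical inclusion of the summand $\mathbb{I}[a,b]^{m_{a,b}}$ into the source and $\pi_{c,d}$ is the canonical projection of the target onto its summand $\mathbb{I}[c,d]^{m'_{c,d}}$. *)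

From HB Require Import structures.
From mathcomp Require Import all_boot all_order all_algebra.
Set Implicit Arguments. Unset Strict Implicit. Unset Printing Implicit Defensive.
Import GRing.Theory.
Local Open Scope ring_scope.

(* Vertices of A_n are the naturals 1..n.  The orientation tau_n is a
   function [tau : nat -> bool]: for 1 <= i < n, [tau i = true] means the
   arrow between i and i+1 is i -> i+1, and [false] means i+1 -> i. *)
Definition asrc (tau : nat -> bool) (i : nat) : nat := if tau i then i else i.+1.
Definition atgt (tau : nat -> bool) (i : nat) : nat := if tau i then i.+1 else i.

(* Summand index of  (+)_{1<=a<=b<=n} I[a,b]^{m a b} : a triple (a, b, k)
   with k < m a b.  Pairs with a = 0 or a > b never contribute (see [inside]). *)
Definition Idx (n : nat) (m : nat -> nat -> nat) : finType :=
  {p : 'I_n.+1 * 'I_n.+1 & 'I_(m p.1 p.2)}.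

Definition ida n m (x : Idx n m) : nat := (tag x).1.
Definition idb n m (x : Idx n m) : nat := (tag x).2.

(* The summand x (a copy of I[a,b]) is nonzero at vertex i iff a <= i <= b;
   so the space of the direct sum at vertex i is K^{ {x | inside i x} }. *)
Definition inside n m (i : nat) (x : Idx n m) : bool :=
  [&& (1 <= ida x)%N, (ida x <= i)%N & (i <= idb x)%N].

Definition mkIdx n (m : nat -> nat -> nat) (a b : 'I_n.+1) (k : 'I_(m a b)) : Idx n m :=
  @Tagged _ (a, b) (fun p => 'I_(m p.1 p.2)) k.
Arguments mkIdx {n m} a b k.

(* A family of linear maps between the direct sums: at vertex i, the matrix
   (row convention: basis vector x is sent to \sum_y Phi i x y * y), where only
   entries with [inside i x] and [inside i y] are meaningful. *)
Definition DSmor (K : fieldType) (n : nat) (m m' : nat -> nat -> nat) :=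
  nat -> Idx n m -> Idx n m' -> K.

(* Matrix of the structure map of the direct sum along an arrow:
   identity between vertices of a common interval summand, zero otherwise. *)
Definition dsArrow (K : fieldType) n m (x y : Idx n m) : K := (x == y)%:R.

Definition is_morphism (K : fieldType) (n : nat) (tau : nat -> bool)
    (m m' : nat -> nat -> nat) (Phi : DSmor K n m m') : Prop :=
  forall i : nat, (1 <= i)%N -> (i < n)%N ->
  forall (x : Idx n m) (z : Idx n m'),
    inside (asrc tau i) x -> inside (atgt tau i) z ->
    \sum_(y : Idx n m | inside (atgt tau i) y) dsArrow K x y * Phi (atgt tau i) y z
    = \sum_(y : Idx n m' | inside (asrc tau i) y) Phi (asrc tau i) x y * dsArrow K y z.

(* Composition Psi o Theta (Theta applied first). *)
Definition mcomp (K : fieldType) n m1 m2 m3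
    (Psi : DSmor K n m2 m3) (Theta : DSmor K n m1 m2) : DSmor K n m1 m3 :=
  fun i x z => \sum_(y : Idx n m2 | inside i y) Theta i x y * Psi i y z.

(* The block Phi^{c:d}_{a:b} = pi_{c,d} o Phi o iota_{a,b} : I[a,b]^{m a b} ->
   I[c,d]^{m' c d}; its component at vertex i (a vertex of [a,b] and [c,d])
   is the (m a b) x (m' c d) matrix below. *)
Definition block (K : fieldType) n (m m' : nat -> nat -> nat) (Phi : DSmor K n m m')
    (a b c d : 'I_n.+1) (i : nat) (k : 'I_(m a b)) (l : 'I_(m' c d)) : K :=
  Phi i (mkIdx a b k) (mkIdx c d l).
Arguments block {K n m m'} Phi a b c d i k l.

(* An entry Phi_t(x, z) of a morphism between direct sums of interval modules
   does not depend on the vertex t as long as both summands x and z are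
   supported at t, and the commutativity square at an arrow that leaves the
   support of x but not that of z (or enters the support of z but not that
   of x) forces it to vanish.  Now let x, z be summands of type [a,b] and y a
   summand of another type [c,d].  The two intervals differ at an endpoint,
   and at the arrow crossing it one of Theta(x, y), Psi(y, z) vanishes,
   whatever the orientation of that arrow; by constancy the product
   Theta_i(x, y) Psi_i(y, z) then vanishes at every vertex i.  Hence only the
   summands of type [a,b] contribute to the diagonal block of Psi Theta. *)

From HB Require Import structures.
From mathcomp Require Import all_boot all_order all_algebra zify.
Import GRing.Theory.
Local Open Scope ring_scope.
Set Implicit Arguments. Unset Strict Implicit.

Lemma idb_le_n n (m : nat -> nat -> nat) (x : Idx n m) : (idb x <= n)%N.
Proof. by rewrite -ltnS ltn_ord. Qed.

Section Morphism.
Variables (K : fieldType) (n : nat) (tau : nat -> bool) (m m' : nat -> nat -> nat).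
Variables (Phi : DSmor K n m m') (HPhi : is_morphism tau Phi).

Lemma arrow_ends t :
  (asrc tau t, atgt tau t) = (t, t.+1) \/ (asrc tau t, atgt tau t) = (t.+1, t).
Proof. by rewrite /asrc /atgt; case: (tau t); [left | right]. Qed.

Lemma morphism_entry t x z : (1 <= t < n)%N ->
  inside (asrc tau t) x -> inside (atgt tau t) z ->
  (if inside (atgt tau t) x then Phi (atgt tau t) x z else 0) =
  (if inside (asrc tau t) z then Phi (asrc tau t) x z else 0).
Proof.
case/andP=> t1 tn xs zt; have := HPhi t1 tn xs zt.
rewrite big_mkcond (bigD1 x) //= big1 ?addr0; last first.
  by move=> y /negbTE yx; rewrite /dsArrow eq_sym yx mul0r if_same.
rewrite [RHS]big_mkcond (bigD1 z) //= big1 ?addr0; last first.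
  by move=> y /negbTE yz; rewrite /dsArrow yz mulr0 if_same.
by rewrite /dsArrow !eqxx mul1r mulr1.
Qed.

Lemma morphism_vanish_src t x z : (1 <= t < n)%N ->
  inside (asrc tau t) x -> ~~ inside (atgt tau t) x ->
  inside (asrc tau t) z -> inside (atgt tau t) z -> Phi (asrc tau t) x z = 0.
Proof. by move=> ht xs /negbTE xt zs zt; have := morphism_entry ht xs zt; rewrite xt zs. Qed.

Lemma morphism_vanish_tgt t x z : (1 <= t < n)%N ->
  inside (asrc tau t) x -> inside (atgt tau t) x ->
  ~~ inside (asrc tau t) z -> inside (atgt tau t) z -> Phi (atgt tau t) x z = 0.
Proof. by move=> ht xs xt /negbTE zs zt; have := morphism_entry ht xs zt; rewrite xt zs. Qed.

Lemma morphism_step x z t : inside t x -> inside t.+1 x -> inside t z -> inside t.+1 z ->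
  Phi t.+1 x z = Phi t x z.
Proof.
move=> xt xt1 zt zt1; have ht : (1 <= t < n)%N.
  by have := idb_le_n x; move: xt xt1; rewrite /inside; lia.
have := morphism_entry ht; rewrite /asrc /atgt.
case: (tau t) => /(_ x z).
- by move=> /(_ xt zt1); rewrite xt1 zt.
- by move=> /(_ xt1 zt); rewrite xt zt1.
Qed.

Lemma morphism_const x z s t : inside s x -> inside s z -> inside t x -> inside t z ->
  Phi s x z = Phi t x z.
Proof.
wlog st : s t / (s <= t)%N.
  by move=> hw xs zs xt zt; case: (leqP s t) => [|/ltnW] st; [|symmetry]; apply: hw.
elim: t st => [|t IH] st xs zs xt zt; first by move: st; rewrite leqn0 => /eqP->.
move: st; rewrite leq_eqVlt ltnS => /predU1P[-> // | st].
have [xt' zt'] : inside t x /\ inside t z by move: xs zs xt zt; rewrite /inside; lia.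
by rewrite (IH st xs zs xt' zt') morphism_step.
Qed.

End Morphism.

Section Composition.
Variables (K : fieldType) (n : nat) (tau : nat -> bool) (m1 m2 m3 : nat -> nat -> nat).
Variables (Theta : DSmor K n m1 m2) (Psi : DSmor K n m2 m3).
Hypotheses (HTheta : is_morphism tau Theta) (HPsi : is_morphism tau Psi).

Lemma comp_vanish_at_arrow t v w (x : Idx n m1) (y : Idx n m2) (z : Idx n m3) :
  (1 <= t < n)%N -> ((v == t) && (w == t.+1)) || ((v == t.+1) && (w == t)) ->
  inside v x -> inside v y -> inside v z ->
  inside w y = ~~ inside w x -> inside w z = inside w x ->
  Theta v x y * Psi v y z = 0.
Proof.
move=> ht vw xv yv zv yw zw.
have [[Es Et]|[Es Et]] :
    (asrc tau t, atgt tau t) = (v, w) \/ (asrc tau t, atgt tau t) = (w, v).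
  by case/orP: vw => /andP[/eqP-> /eqP->]; case: (arrow_ends tau t) => ->; auto.
- case: (boolP (inside w x)) => xw.
  + by rewrite -Es (morphism_vanish_src HPsi ht) ?mulr0 ?Es ?Et ?yw ?zw ?xw.
  + by rewrite -Es (morphism_vanish_src HTheta ht) ?mul0r ?Es ?Et ?yw ?xw.
- case: (boolP (inside w x)) => xw.
  + by rewrite -Et (morphism_vanish_tgt HTheta ht) ?mul0r ?Es ?Et ?yw ?xw.
  + by rewrite -Et (morphism_vanish_tgt HPsi ht) ?mulr0 ?Es ?Et ?yw ?zw ?xw.
Qed.

Lemma comp_vanish_offdiag (x : Idx n m1) (y : Idx n m2) (z : Idx n m3) i :
  ida z = ida x -> idb z = idb x -> (ida y, idb y) != (ida x, idb x) ->
  inside i x -> inside i y -> Theta i x y * Psi i y z = 0.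
Proof.
move=> za zb yx xi yi; have zE v : inside v z = inside v x by rewrite /inside za zb.
have vanish t v w : ((v == t) && (w == t.+1)) || ((v == t.+1) && (w == t)) ->
    (1 <= t < n)%N -> inside v x -> inside v y -> inside w y = ~~ inside w x ->
    Theta i x y * Psi i y z = 0.
  move=> vw ht xv yv yw.
  rewrite (morphism_const HTheta xi yi xv yv) (morphism_const HPsi yi _ yv) ?zE //.
  by apply: (comp_vanish_at_arrow ht vw); rewrite ?zE.
have := idb_le_n x; have := idb_le_n y; move: xi yi; rewrite /inside in vanish * => xi yi yn xn.
case: (ltngtP (ida y) (ida x)) => [ltx|lty|ea].
- by apply: (vanish (ida x).-1 (ida x) (ida x).-1); lia.
- by apply: (vanish (ida y).-1 (ida y) (ida y).-1); lia.
case: (ltngtP (idb y) (idb x)) => [ltx|lty|eb]; last by rewrite ea eb eqxx in yx.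
- by apply: (vanish (idb y) (idb y) (idb y).+1); lia.
- by apply: (vanish (idb x) (idb x) (idb x).+1); lia.
Qed.

End Composition.

Lemma sum_summand (R : nmodType) n (m : nat -> nat -> nat) (F : Idx n m -> R)
    (a b : 'I_n.+1) i : (1 <= a)%N -> (a <= i <= b)%N ->
  \sum_(y | inside i y && (tag y == (a, b))) F y = \sum_(j < m a b) F (mkIdx a b j).
Proof.
move=> a1 abi.
have -> : \sum_(j < m a b) F (mkIdx a b j) =
    \sum_(p | p == (a, b)) \sum_(j < m p.1 p.2) F (Tagged _ j) by rewrite big_pred1_eq.
rewrite sig_big_dep /=; apply: eq_big => [[[c d] j]|[[c d] j]] //=.
rewrite andbT andbC; case: eqP => //= -[ca db].
by rewrite /inside /ida /idb /= ca db; lia.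
Qed.

Theorem mainTheorem6 (K : fieldType) (n : nat) (tau : nat -> bool)
    (m1 m2 m3 : nat -> nat -> nat)
    (Theta : DSmor K n m1 m2) (Psi : DSmor K n m2 m3) :
  (1 <= n)%N ->
  is_morphism tau Theta -> is_morphism tau Psi ->
  forall a b : 'I_n.+1, (1 <= a)%N -> (a <= b)%N ->
  forall i : nat, (a <= i)%N -> (i <= b)%N ->
  forall (k : 'I_(m1 a b)) (l : 'I_(m3 a b)),
    block (mcomp Psi Theta) a b a b i k l
    = \sum_(j < m2 a b) block Psi a b a b i j l * block Theta a b a b i k j.
Proof.
move=> _ HTheta HPsi a b a1 ab i ai ib k l.
rewrite /block /mcomp (bigID (fun y => tag y == (a, b))) /=.
rewrite [X in _ + X]big1 ?addr0 => [|y /andP[yi yab]].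
  by rewrite sum_summand ?ai //; apply: eq_bigr => j _; rewrite mulrC.
by apply: (comp_vanish_offdiag HTheta HPsi) => //; rewrite /inside /ida /idb /=; lia.
Qed.
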